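(* Let $S$ be a set with $0\in S$. For every space $X\in\{V_S,\overline{V_S},\widehat{V_S},\overline{\overline{V_S}}\}$ the canonical projection $\pi_X\colon\mathrm{Aut}(X)\to\mathrm{Aut}(\mathbb Q_{\ge0})$, $f\mapsto D_f$, admits a group homomorphism $s_X\colon\mathrm{Aut}(\mathbb Q_{\ge0})\to\mathrm{Aut}(X)$ with $\pi_X\circ s_X=\mathrm{id}$. Moreover, $s_X\colon\mathrm{Aut}(\mathbb Q_{\ge0})\to\mathrm{Aut}(X)$ is continuous for $X=V_S$, and $s_X\colon\mathrm{Aut}(\mathbb Q_{\ge0})\to\mathrm{Aut}_M(X)$ is continuous for $X=\overline{V_S}$.
   Context: For $f\colon\mathbb Q_{>0}\to S$ let $\mathrm{supp}(f)=\{x:f(x)\ne0\}$. $V_S$: all $f$ with finite support; $\overline{V_S}$: all $f$ whose support is finite or a decreasing sequence converging to $0$; $\widehat{V_S}$: support finite or a decreasing sequence; $\overline{\overline{V_S}}$: support is conversely well-ordered (a decreasing countable ordinal). Each is a two-sorted ultrametric space with distance set $\mathbb Q_{\ge0}$ and $d(f,g)=\max\{r\in\mathbb Q_{>0}:f(r)\ne g(r)\}$ for $f\ne g$. A dc-automorphism of $X$ is a bijection $f$ of $X$ with an order automorphism $D_f$ of $\mathbb Q_{\ge0}$ such that $d(f(x),f(y))=D_f(d(x,y))$. $\mathrm{Aut}(X)$: group of dc-automorphisms with topology of pointwise convergence on both sorts (basic neighbourhoods: agree with $f$ on finitely many points and finitely many distances). $\mathrm{Aut}_M(X)$: same group with basic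 neighbourhoods $\{g:d(g(x),f(x))<r\ \forall x\in A\}$, $A$ finite, $r\in\mathbb Q_{>0}$. $\mathrm{Aut}(\mathbb Q_{\ge0})$: order automorphisms with pointwise convergence topology. *)

From HB Require Import structures.
From mathcomp Require Import all_boot all_order all_algebra.
From mathcomp Require Import boolp classical_sets cardinality.
Set Implicit Arguments. Unset Strict Implicit. Unset Printing Implicit Defensive.
Import Order.TTheory GRing.Theory Num.Theory.
Local Open Scope ring_scope.
Local Open Scope classical_set_scope.

Definition qpos := {q : rat | 0 < q}.
Definition qnn := {q : rat | 0 <= q}.

Section Spaces.
Variables (S : Type) (s0 : S).   (* s0 plays the role of 0 in S *)

Definition supp (f : qpos -> S) : set qpos := [set q | f q <> s0].

Definition strict_decr (a : nat -> qpos) : Prop :=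
  forall n, sval (a n.+1) < sval (a n).

Definition PV (f : qpos -> S) : Prop := finite_set (supp f).

Definition PVbar (f : qpos -> S) : Prop :=
  finite_set (supp f) \/
  exists a : nat -> qpos, strict_decr a /\ supp f = range a /\
    (forall e : rat, 0 < e -> exists N, forall n, (N <= n)%N -> `|sval (a n)| < e).

Definition PVhat (f : qpos -> S) : Prop :=
  finite_set (supp f) \/
  exists a : nat -> qpos, strict_decr a /\ supp f = range a.

Definition PVbb (f : qpos -> S) : Prop :=
  forall A : set qpos, A `<=` supp f -> A !=set0 ->
    exists2 m, A m & forall q, A q -> sval q <= sval m.

Definition space (P : (qpos -> S) -> Prop) := {f : qpos -> S | P f}.

(* d(f,g) = r : r = 0 if f = g, otherwise r = max {x > 0 : f x <> g x} *)
Definition isdist (f g : qpos -> S) (r : qnn) : Prop :=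
  (f = g /\ sval r = 0) \/
  ((exists2 q : qpos, sval q = sval r & f q <> g q) /\
   (forall q : qpos, sval r < sval q -> f q = g q)).

End Spaces.

Record qaut := QAut {
  qa_fun :> qnn -> qnn;
  qa_bij : bijective qa_fun;
  qa_mono : forall x y : qnn, (sval x <= sval y) = (sval (qa_fun x) <= sval (qa_fun y))
}.

(* dc-automorphisms of the space X = space P : pairs (F, D_F) *)
Record dcaut (S : Type) (s0 : S) (P : (qpos -> S) -> Prop) := DCAut {
  dc_fun : space P -> space P;
  dc_D : qaut;
  dc_bij : bijective dc_fun;
  dc_dist : forall (x y : space P) (r : qnn),
      isdist (sval x) (sval y) r ->
      isdist (sval (dc_fun x)) (sval (dc_fun y)) (dc_D r)
}.

Definition section_hom (S : Type) (s0 : S) (P : (qpos -> S) -> Prop)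
    (s : qaut -> dcaut s0 P) : Prop :=
  (forall sigma tau rho : qaut, (forall r, rho r = sigma (tau r)) ->
     (forall x, dc_fun (s rho) x = dc_fun (s sigma) (dc_fun (s tau) x)) /\
     (forall r, dc_D (s rho) r = dc_D (s sigma) (dc_D (s tau) r))) /\
  (forall (sigma : qaut) r, dc_D (s sigma) r = sigma r).

(* continuity Aut(Q>=0) -> Aut(X), both with the pointwise-convergence
   topology (on both sorts for Aut(X)), via basic neighbourhoods *)
Definition cont_pointwise (S : Type) (s0 : S) (P : (qpos -> S) -> Prop)
    (s : qaut -> dcaut s0 P) : Prop :=
  forall (sigma : qaut) (A : set (space P)) (B : set qnn),
    finite_set A -> finite_set B ->
    exists C : set qnn, finite_set C /\
      forall tau : qaut, (forall r, C r -> tau r = sigma r) ->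
        (forall x, A x -> dc_fun (s tau) x = dc_fun (s sigma) x) /\
        (forall r, B r -> dc_D (s tau) r = dc_D (s sigma) r).

(* continuity Aut(Q>=0) -> Aut_M(X), via basic neighbourhoods
   {g : d(g x, f x) < e for all x in A} *)
Definition cont_metric (S : Type) (s0 : S) (P : (qpos -> S) -> Prop)
    (s : qaut -> dcaut s0 P) : Prop :=
  forall (sigma : qaut) (A : set (space P)) (e : rat),
    finite_set A -> 0 < e ->
    exists C : set qnn, finite_set C /\
      forall tau : qaut, (forall r, C r -> tau r = sigma r) ->
        forall x, A x -> exists2 d : qnn,
          isdist (sval (dc_fun (s tau) x)) (sval (dc_fun (s sigma) x)) d &
          sval d < e.

From Pilot Require Import Defs.
From mathcomp Require Import all_boot all_order all_algebra.
From mathcomp Require Import boolp classical_sets cardinality.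
Set Implicit Arguments. Unset Strict Implicit. Unset Printing Implicit Defensive.
Import Order.TTheory GRing.Theory Num.Theory.
Local Open Scope ring_scope.
Local Open Scope classical_set_scope.

(* An order automorphism sigma of Q_{>=0} fixes 0, hence restricts to an order
   automorphism of Q_{>0}, and it acts on functions by f |-> f o sigma^-1.
   This action moves supports and distances by sigma, so it is a homomorphic
   section of f |-> D_f, and it preserves each of the four support conditions
   because sigma is an order isomorphism fixing 0.  The image of f only
   depends on sigma on supp f: for finite supports this gives pointwise
   continuity.  For supports decreasing to 0, the image of f up to distance e
   only depends on sigma at sigma^-1(e) and at the finitely many points of
   supp f above sigma^-1(e), which gives continuity into Aut_M. *)

Lemma sval_inj (T : Type) (P : T -> Prop) : injective (@sval T P).
Proof. by case=> x hx [y hy] /= exy; apply: eq_exist. Qed.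

Section QAut.
Implicit Types (s sig tau rho : qaut) (x y : qnn) (p q : qpos).

Lemma qaut_lt s x y : (sval x < sval y) = (sval (s x) < sval (s y)).
Proof. by rewrite !ltNge (qa_mono s y x). Qed.

Lemma qaut_inv_subproof s : {g : qnn -> qnn | cancel s g /\ cancel g s}.
Proof. by apply: cid; case: (qa_bij s) => g; exists g. Qed.

Definition qaut_invfun s : qnn -> qnn := sval (qaut_inv_subproof s).

Lemma qaut_invfunK s : cancel s (qaut_invfun s).
Proof. by case: (svalP (qaut_inv_subproof s)). Qed.

Lemma qaut_invfunKV s : cancel (qaut_invfun s) s.
Proof. by case: (svalP (qaut_inv_subproof s)). Qed.

Definition qaut_inv s : qaut.
Proof.
refine (@QAut (qaut_invfun s) _ _).
  by exists s; [apply: qaut_invfunKV | apply: qaut_invfunK].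
by move=> x y; rewrite [RHS](qa_mono s) !qaut_invfunKV.
Defined.

Definition qaut1 : qaut.
Proof. by refine (@QAut id _ _) => //; exists id. Defined.

Definition qnn0 : qnn := exist _ 0 (lexx 0).

Lemma qaut0 s : s qnn0 = qnn0.
Proof.
have s0_le0 : sval (s qnn0) <= sval qnn0.
  by rewrite -{2}(qaut_invfunKV s qnn0) -qa_mono (svalP (qaut_invfun s qnn0)).
by apply: sval_inj; apply/eqP; rewrite eq_le s0_le0 (svalP (s qnn0)).
Qed.

Lemma qaut_gt0 s x : 0 < sval x -> 0 < sval (s x).
Proof. by rewrite -[0]/(sval qnn0) (qaut_lt s) qaut0. Qed.

Definition qnn_of_pos p : qnn := exist _ (sval p) (ltW (svalP p)).

Definition qaut_pos s p : qpos :=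
  exist _ (sval (s (qnn_of_pos p))) (@qaut_gt0 s (qnn_of_pos p) (svalP p)).

Lemma qaut_posE s p : qnn_of_pos (qaut_pos s p) = s (qnn_of_pos p).
Proof. exact: sval_inj. Qed.

Lemma qaut_posK s : cancel (qaut_pos s) (qaut_pos (qaut_inv s)).
Proof. by move=> p; apply: sval_inj; rewrite /= qaut_posE qaut_invfunK. Qed.

Lemma qaut_posKV s : cancel (qaut_pos (qaut_inv s)) (qaut_pos s).
Proof. by move=> p; apply: sval_inj; rewrite /= qaut_posE qaut_invfunKV. Qed.

Lemma qaut_pos_inj s : injective (qaut_pos s).
Proof. exact: can_inj (qaut_posK s). Qed.

Lemma qaut_pos_le s p q :
  (sval (qaut_pos s p) <= sval (qaut_pos s q)) = (sval p <= sval q).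
Proof. by rewrite /= -qa_mono. Qed.

Lemma qaut_pos_lt s p q :
  (sval (qaut_pos s p) < sval (qaut_pos s q)) = (sval p < sval q).
Proof. by rewrite /= -qaut_lt. Qed.

Lemma qaut_pos_comp rho sig tau : (forall r, rho r = sig (tau r)) ->
  forall p, qaut_pos rho p = qaut_pos sig (qaut_pos tau p).
Proof. by move=> rhoE p; apply: sval_inj; rewrite /= qaut_posE rhoE. Qed.

End QAut.

Section ConverselyWellOrdered.
Implicit Types (X Y : set qpos).

Definition conv_wo X := forall A : set qpos, A `<=` X -> A !=set0 ->
  exists2 m, A m & forall q, A q -> sval q <= sval m.

Lemma seq_qpos_max (s : seq qpos) : s != [::] ->
  exists2 m, m \in s & forall q, q \in s -> sval q <= sval m.
Proof.
elim: s => [//|x t IH] _; case: (eqVneq t [::]) => [->|/IH [m tm m_max]].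
  by exists x; rewrite ?mem_seq1 // => q; rewrite mem_seq1 => /eqP ->.
have [xm|mx] := leP (sval x) (sval m).
  by exists m; [rewrite inE tm orbT | move=> q; rewrite inE => /orP[/eqP ->|/m_max]].
exists x; first by rewrite inE eqxx.
by move=> q; rewrite inE => /orP[/eqP ->//|/m_max /le_trans]; apply; apply: ltW.
Qed.

Lemma conv_wo_finite X : finite_set X -> conv_wo X.
Proof.
move=> finX A AX [q Aq].
have /finite_seqP [s As] : finite_set A by apply: sub_finite_set AX finX.
have s_neq0 : s != [::] by apply/eqP => s0; move: Aq; rewrite As s0.
have [m sm m_max] := seq_qpos_max s_neq0.
by exists m; rewrite ?As // => q'; rewrite As; apply: m_max.
Qed.

Lemma strict_decr_le (a : nat -> qpos) : strict_decr a ->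
  {homo a : m n / (m <= n)%N >-> sval n <= sval m}.
Proof.
by move=> a_decr; apply: homo_leq => // [y x z yx zy|n]; [apply: le_trans zy yx | apply: ltW].
Qed.

Lemma conv_wo_range (a : nat -> qpos) : strict_decr a -> conv_wo (range a).
Proof.
move=> a_decr A Aa [q Aq]; have [k _ akq] := Aa q Aq.
have exA : exists n, `[< A (a n) >] by exists k; apply/asboolP; rewrite akq.
case: (ex_minnP exA) => n /asboolP Aan n_min; exists (a n) => // q' Aq'.
have [k' _ ak'q'] := Aa q' Aq'; rewrite -ak'q'.
by apply: strict_decr_le => //; apply: n_min; apply/asboolP; rewrite ak'q'.
Qed.

Lemma conv_woU X Y : conv_wo X -> conv_wo Y -> conv_wo (X `|` Y).
Proof.
move=> woX woY A AXY A_neq0.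
have [[x [Ax Xx]]|AX0] := pselect (A `&` X !=set0); last first.
  by apply: woY => // q Aq; case: (AXY q Aq) => // Xq; case: AX0; exists q.
have [[y [Ay Yy]]|AY0] := pselect (A `&` Y !=set0); last first.
  by apply: woX => // q Aq; case: (AXY q Aq) => // Yq; case: AY0; exists q.
have [m1 [Am1 _] m1_max] := woX _ (@subIsetr _ A X) (ex_intro _ x (conj Ax Xx)).
have [m2 [Am2 _] m2_max] := woY _ (@subIsetr _ A Y) (ex_intro _ y (conj Ay Yy)).
have [m12|m21] := leP (sval m1) (sval m2).
  exists m2 => // q Aq; case: (AXY q Aq) => [Xq|Yq]; last exact: m2_max.
  exact: le_trans (m1_max q (conj Aq Xq)) m12.
exists m1 => // q Aq; case: (AXY q Aq) => [Xq|Yq]; first exact: m1_max.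
exact: le_trans (m2_max q (conj Aq Yq)) (ltW m21).
Qed.

Lemma conv_wo_image (h : qpos -> qpos) X :
  {homo h : p q / sval p <= sval q} -> conv_wo X -> conv_wo (h @` X).
Proof.
move=> h_mono woX A AhX [q Aq].
have [p Xp hpq] := AhX q Aq.
have Ahp : (h @^-1` A `&` X) p by split; rewrite //= hpq.
have [m [Ahm Xm] m_max] := woX _ (@subIsetr _ _ _) (ex_intro _ p Ahp).
exists (h m) => // q' Aq'; have [p' Xp' hp'] := AhX q' Aq'.
by rewrite -hp'; apply: h_mono; apply: m_max; split; rewrite //= hp'.
Qed.

End ConverselyWellOrdered.

Section Action.
Variables (S : Type) (s0 : S).
Implicit Types (f g : qpos -> S) (s sig tau rho : qaut).

Definition act s f : qpos -> S := f \o qaut_pos (qaut_inv s).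

Lemma act_pos s f p : act s f (qaut_pos s p) = f p.
Proof. by rewrite /act /= qaut_posK. Qed.

Lemma supp_act s f : supp s0 (act s f) = qaut_pos s @` supp s0 f.
Proof.
apply/seteqP; split => q /=; last by case=> p fp <-; rewrite /supp /= act_pos.
by move=> fq; exists (qaut_pos (qaut_inv s) q); rewrite ?qaut_posKV.
Qed.

Lemma act_comp rho sig tau f : (forall r, rho r = sig (tau r)) ->
  act rho f = act sig (act tau f).
Proof.
move=> rhoE; apply: funext => q; rewrite /act /=; congr f.
by apply: (@qaut_pos_inj rho); rewrite qaut_posKV (qaut_pos_comp rhoE) !qaut_posKV.
Qed.

Lemma act_qaut1 f : act qaut1 f = f.
Proof.
apply: funext => q; rewrite /act /=; congr f.
by apply: (@qaut_pos_inj qaut1); rewrite qaut_posKV; apply: sval_inj.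
Qed.

Lemma act_invK s : cancel (act s) (act (qaut_inv s)).
Proof. by move=> f; rewrite -(@act_comp qaut1) ?act_qaut1 // => r; rewrite /= qaut_invfunK. Qed.

Lemma act_invKV s : cancel (act (qaut_inv s)) (act s).
Proof. by move=> f; rewrite -(@act_comp qaut1) ?act_qaut1 // => r; rewrite /= qaut_invfunKV. Qed.

Lemma isdist_act s f g r : isdist f g r -> isdist (act s f) (act s g) (s r).
Proof.
case=> [[<- r0]|[[q qr fgq] fg_gt]].
  by left; split=> //; rewrite (_ : r = qnn0) ?qaut0 //; apply: sval_inj.
have qrE : qnn_of_pos q = r by apply: sval_inj.
right; split; first by exists (qaut_pos s q); rewrite ?act_pos // -qrE.
move=> q'; rewrite -(qaut_posKV s q') -qrE -qaut_posE qaut_pos_lt => qq'.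
by rewrite !act_pos; apply: fg_gt; rewrite -qrE.
Qed.

Lemma act_eq_above tau sig f (c : qnn) : tau c = sig c ->
  (forall p, supp s0 f p -> sval c <= sval p -> qaut_pos tau p = qaut_pos sig p) ->
  forall q, sval (sig c) <= sval q -> act tau f q = act sig f q.
Proof.
move=> tau_c tau_sig q cq; rewrite /act /=.
set p := qaut_pos (qaut_inv sig) q; set p' := qaut_pos (qaut_inv tau) q.
have above s : sval (s c) <= sval q -> sval c <= sval (qaut_pos (qaut_inv s) q).
  by rewrite -[sval (qaut_pos _ _)]/(sval (qnn_of_pos _)) (qa_mono s) -qaut_posE qaut_posKV.
have cp := above sig cq; have cp' : sval c <= sval p' by apply: above; rewrite tau_c.
have p'p : supp s0 f p \/ supp s0 f p' -> p' = p.
  case=> [fp|fp'].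
    by apply: (@qaut_pos_inj tau); rewrite [RHS]tau_sig // !qaut_posKV.
  by apply: (@qaut_pos_inj sig); rewrite -[LHS]tau_sig // !qaut_posKV.
have [/p'p -> //|/not_orP[fp fp']] := pselect (supp s0 f p \/ supp s0 f p').
by rewrite (contrapT fp) (contrapT fp').
Qed.

Definition act_invariant (P : (qpos -> S) -> Prop) := forall s f, P f -> P (act s f).

Section ActDCAut.
Variables (P : (qpos -> S) -> Prop) (P_act : act_invariant P).

Definition act_space s (x : Defs.space P) : Defs.space P :=
  exist _ (act s (sval x)) (P_act s (svalP x)).

Lemma act_space_bij s : bijective (act_space s).
Proof.
by exists (act_space (qaut_inv s)) => x; apply: sval_inj; rewrite /= ?act_invK ?act_invKV.
Qed.

Definition act_dcaut s : dcaut s0 P :=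
  @DCAut S s0 P (act_space s) s (act_space_bij s)
    (fun x y r => @isdist_act s (sval x) (sval y) r).

Lemma act_dcaut_section : section_hom act_dcaut.
Proof. by split=> // sig tau rho rhoE; split=> // x; apply: sval_inj; apply: act_comp. Qed.

End ActDCAut.

Lemma PV_act : act_invariant (PV s0).
Proof. by move=> s f; rewrite /PV supp_act; apply: finite_image. Qed.

Lemma strict_decr_act s (a : nat -> qpos) :
  strict_decr a -> strict_decr (qaut_pos s \o a).
Proof. by move=> a_decr n; rewrite /= qaut_pos_lt. Qed.

Lemma PVhat_act : act_invariant (PVhat s0).
Proof.
move=> s f [finf|[a [a_decr fa]]]; rewrite /PVhat supp_act.
  by left; apply: finite_image.
right; exists (qaut_pos s \o a).
by rewrite fa image_comp; split=> //; apply: strict_decr_act.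
Qed.

Lemma PVbar_act : act_invariant (PVbar s0).
Proof.
move=> s f [finf|[a [a_decr [fa a_cvg]]]]; rewrite /PVbar supp_act.
  by left; apply: finite_image.
right; exists (qaut_pos s \o a); rewrite fa image_comp; split; first exact: strict_decr_act.
split=> // e e_gt0; pose eN : qnn := exist _ e (ltW e_gt0).
have [N aN] := a_cvg _ (@qaut_gt0 (qaut_inv s) eN e_gt0).
exists N => n /aN; rewrite !gtr0_norm ?(svalP (a n)) ?(svalP (qaut_pos s (a n))) //.
by rewrite -[sval (a n)]/(sval (qnn_of_pos (a n))) (qaut_lt s) /= qaut_invfunKV.
Qed.

Lemma PVbb_act : act_invariant (PVbb s0).
Proof.
move=> s f; rewrite /PVbb supp_act; apply: (@conv_wo_image _ (supp s0 f)) => p q.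
by rewrite qaut_pos_le.
Qed.

Lemma PVbar_conv_wo f : PVbar s0 f -> conv_wo (supp s0 f).
Proof. by case=> [/conv_wo_finite //|[a [a_decr [-> _]]]]; apply: conv_wo_range. Qed.

Lemma PVbar_finite_above f c : PVbar s0 f -> 0 < c ->
  finite_set (supp s0 f `&` [set p | c <= sval p]).
Proof.
case=> [finf|[a [a_decr [fa a_cvg]]]] c_gt0; first exact: finite_setIl.
have [N aN] := a_cvg _ c_gt0.
apply: (@sub_finite_set _ _ (a @` `I_N)); last exact: finite_image (finite_II N).
move=> p []; rewrite fa => -[n _ <-] /= c_an; exists n => //=.
rewrite ltnNge; apply/negP => /aN.
by rewrite gtr0_norm ?(svalP (a n)) // ltNge c_an.
Qed.

Lemma isdist_exists f g : conv_wo (supp s0 f `|` supp s0 g) -> exists d, isdist f g d.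
Proof.
move=> wo_fg; have [->|fg] := pselect (f = g); first by exists qnn0; left.
pose D := [set q | f q <> g q].
have D_neq0 : D !=set0.
  apply: contrapT => D0; apply: fg; apply: funext => q.
  by apply: contrapT => fgq; apply: D0; exists q.
have D_supp : D `<=` supp s0 f `|` supp s0 g.
  move=> q fgq; have [fq0|] := pselect (f q = s0); last by left.
  by right; rewrite /supp /= -fq0 => /esym.
have [m Dm m_max] := wo_fg D D_supp D_neq0.
exists (qnn_of_pos m); right; split; first by exists m.
move=> q mq; apply: contrapT => fgq.
by have := m_max q fgq; rewrite leNgt mq.
Qed.

Lemma isdist_lt f g d e : isdist f g d -> 0 < e ->
  (forall q, e <= sval q -> f q = g q) -> sval d < e.
Proof.
move=> [[_ ->] //|[[q <- fgq] _]] _ fg_above.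
by rewrite ltNge; apply/negP => /fg_above.
Qed.

Lemma act_dcaut_PV_cont : cont_pointwise (act_dcaut PV_act).
Proof.
move=> sig A B finA finB.
exists (B `|` \bigcup_(x in A) (qnn_of_pos @` supp s0 (sval x))); split.
  rewrite finite_setU; split=> //; apply: bigcup_finite => // x _.
  exact: finite_image (svalP x).
move=> tau tau_sig; split=> [x Ax|r Br]; last by apply: tau_sig; left.
apply: sval_inj; apply: funext => q /=.
apply: (@act_eq_above _ _ _ qnn0); first by rewrite !qaut0.
  by move=> p fp _; apply: sval_inj; rewrite /= tau_sig //; right; exists x => //; exists p.
by rewrite qaut0 ltW // (svalP q).
Qed.

Lemma act_dcaut_PVbar_cont : cont_metric (act_dcaut PVbar_act).
Proof.
move=> sig A e finA e_gt0.
pose eN : qnn := exist _ e (ltW e_gt0); pose c := qaut_inv sig eN.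
have c_gt0 : 0 < sval c := @qaut_gt0 _ eN e_gt0.
exists ([set c] `|` \bigcup_(x in A)
    (qnn_of_pos @` (supp s0 (sval x) `&` [set p | sval c <= sval p]))); split.
  rewrite finite_setU; split; first exact: finite_set1.
  apply: bigcup_finite => // x _; apply: finite_image.
  exact: PVbar_finite_above (svalP x) c_gt0.
move=> tau tau_sig x Ax /=.
have [d dE] : exists d, isdist (act tau (sval x)) (act sig (sval x)) d.
  by apply/isdist_exists/conv_woU; apply/PVbar_conv_wo/PVbar_act/svalP.
exists d => //; apply: (isdist_lt dE e_gt0) => q eq.
apply: act_eq_above; first by apply: tau_sig; left.
  by move=> p fp cp; apply: sval_inj; rewrite /= tau_sig //; right; exists x => //; exists p.
by rewrite /= qaut_invfunKV.
Qed.

End Action.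

Theorem proposition3p26 (S : Type) (s0 : S) :
  (exists s : qaut -> dcaut s0 (PV s0),
      section_hom s /\ cont_pointwise s) /\
  (exists s : qaut -> dcaut s0 (PVbar s0),
      section_hom s /\ cont_metric s) /\
  (exists s : qaut -> dcaut s0 (PVhat s0), section_hom s) /\
  (exists s : qaut -> dcaut s0 (PVbb s0), section_hom s).
Proof.
split; first by exists (act_dcaut s0 (@PV_act _ s0)); split;
  [exact: act_dcaut_section | exact: act_dcaut_PV_cont].
split; first by exists (act_dcaut s0 (@PVbar_act _ s0)); split;
  [exact: act_dcaut_section | exact: act_dcaut_PVbar_cont].
split; first by exists (act_dcaut s0 (@PVhat_act _ s0)); exact: act_dcaut_section.
by exists (act_dcaut s0 (@PVbb_act _ s0)); exact: act_dcaut_section.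
Qed.
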